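(* Let $A_1,\dots,A_n\subseteq\mathbb Z^n$ be finite, $M=(\mathbb C\setminus\{0\})^n$, and let $\mathscr F_i$ be the space of Laurent polynomials $\sum_{\mathbf a\in A_i}f_{\mathbf a}\mathbf z^{\mathbf a}$ with inner product $\langle\sum f_{\mathbf a}\mathbf z^{\mathbf a},\sum g_{\mathbf a}\mathbf z^{\mathbf a}\rangle=\sum_{\mathbf a\in A_i}f_{\mathbf a}\overline{g_{\mathbf a}}$. Let $\lambda_1,\dots,\lambda_n$ be positive integers, $\mathscr G=\mathscr F_1^{\lambda_1}\cdots\mathscr F_n^{\lambda_n}$ and $B=\lambda_1A_1+\cdots+\lambda_nA_n$ (Minkowski sum). For $\mathbf b\in B$ let $c_{\mathbf b}$ be the number of ordered tuples $(\mathbf a_{11},\dots,\mathbf a_{1\lambda_1},\dots,\mathbf a_{n1},\dots,\mathbf a_{n\lambda_n})$ with $\mathbf a_{ij}\in A_i$ and $\sum_{i,j}\mathbf a_{ij}=\mathbf b$. Then $\mathscr G$ is the space of Laurent polynomials $\sum_{\mathbf b\in B}f_{\mathbf b}\mathbf z^{\mathbf b}$ with inner product \[\Big\langle\sum_{\mathbf b\in B}f_{\mathbf b}\mathbf z^{\mathbf b},\sum_{\mathbf b\in B}g_{\mathbf b}\mathbf z^{\mathbf b}\Big\rangle_{\mathscr G}=\sum_{\mathbf b\in B}\frac{f_{\mathbf b}\overline{g_{\mathbf b}}}{c_{\mathbf b}}.\]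
   Context: A fewspace on a complex manifold $M$ is a complex Hilbert space of holomorphic functions $M\to\mathbb C$ on which every evaluation $f\mapsto f(\mathbf x)$ is a continuous, nonzero linear functional. Product of fewspaces: regard the Hilbert tensor product $\mathscr E\otimes\mathscr F$ as functions on $M\times M$ via $(e\otimes f)(\mathbf x_1,\mathbf x_2)=e(\mathbf x_1)f(\mathbf x_2)$, let $\Delta(h)(\mathbf x)=h(\mathbf x,\mathbf x)$; $\mathscr E\mathscr F=\Delta(\mathscr E\otimes\mathscr F)$ with norm $\|g\|=\min\{\|h\|:\Delta(h)=g\}$; $\mathscr F^\lambda$ is the $\lambda$-fold product. *)

(* Finite-dimensional model of the fewspaces in the statement:
   Laurent polynomials are represented by their coefficient functions
   'rV[int]_n -> C, supported on a finite exponent set. *)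
From HB Require Import structures.
From mathcomp Require Import all_boot all_order all_algebra.
Set Implicit Arguments. Unset Strict Implicit. Unset Printing Implicit Defensive.
Import Order.TTheory GRing.Theory Num.Theory.
Local Open Scope ring_scope.

Section Defs.
Variables (C : numClosedFieldType) (n : nat).
Local Notation X := 'rV[int]_n.

Record lspace := LSpace { supp : seq X ; ip : (X -> C) -> (X -> C) -> C }.

Definition supported (A : seq X) (f : X -> C) : Prop :=
  forall x, x \notin A -> f x = 0.

Definition delta (a : X) : X -> C := fun x => (x == a)%:R.

(* Hilbert tensor product E (x) F: elements h = sum h a b z^a (x) z^b;
   inner product induced from those of E and F. *)
Definition tsupported (E F : lspace) (h : X -> X -> C) : Prop :=
  forall a b, (a \notin supp E) || (b \notin supp F) -> h a b = 0.

Definition tensor_ip (E F : lspace) (h h' : X -> X -> C) : C :=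
  \sum_(a <- undup (supp E)) \sum_(a' <- undup (supp E))
   \sum_(b <- undup (supp F)) \sum_(b' <- undup (supp F))
     h a b * (h' a' b')^* * ip E (delta a) (delta a') * ip F (delta b) (delta b').

(* Delta(h)(x) = h(x,x): on monomials z^a (x) z^b |-> z^(a+b). *)
Definition diag (E F : lspace) (h : X -> X -> C) : X -> C :=
  fun c => \sum_(a <- undup (supp E)) \sum_(b <- undup (supp F))
             (a + b == c)%:R * h a b.

Definition sumset (E F : lspace) : seq X := [seq a + b | a <- supp E, b <- supp F].

Definition is_sesq (P : lspace) : Prop :=
  (forall f1 f2 g (k : C), supported (supp P) f1 -> supported (supp P) f2 ->
     supported (supp P) g ->
     ip P (fun x => k * f1 x + f2 x) g = k * ip P f1 g + ip P f2 g) /\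
  (forall f g, supported (supp P) f -> supported (supp P) g ->
     ip P g f = (ip P f g)^*).

Definition is_min_norm (E F : lspace) (g : X -> C) (r : C) : Prop :=
  (exists2 h, tsupported E F h &
     (forall x, diag E F h x = g x) /\ tensor_ip E F h h = r) /\
  (forall h, tsupported E F h -> (forall x, diag E F h x = g x) ->
     r <= tensor_ip E F h h).

Definition is_product (E F P : lspace) : Prop :=
  supp P =i sumset E F /\ is_sesq P /\
  forall g, supported (supp P) g -> is_min_norm E F g (ip P g g).

Definition space_eq (P Q : lspace) : Prop :=
  supp P =i supp Q /\
  forall f g, supported (supp P) f -> supported (supp P) g -> ip P f g = ip Q f g.

Definition unit_space : lspace := LSpace [:: 0] (fun f g => f 0 * (g 0)^*).

Fixpoint is_mprod (l : seq lspace) (P : lspace) : Prop :=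
  match l with
  | [::] => space_eq P unit_space
  | E :: l' =>
      match l' with
      | [::] => space_eq P E
      | _ => exists Q, is_mprod l' Q /\ is_product E Q P
      end
  end.

Definition is_power (F : lspace) (lam : nat) (P : lspace) : Prop :=
  is_mprod (nseq lam F) P.

Definition laurent_space (A : seq X) : lspace :=
  LSpace A (fun f g => \sum_(a <- undup A) f a * (g a)^*).

Definition sum_tuples (l : seq (seq X)) : seq X :=
  foldr (fun A acc => [seq a + s | a <- undup A, s <- acc]) [:: 0] l.

Definition tuple_sums (A : 'I_n -> seq X) (lam : 'I_n -> nat) : seq X :=
  sum_tuples (flatten [seq nseq (lam i) (A i) | i <- enum 'I_n]).

Definition Bset A lam : seq X := undup (tuple_sums A lam).

Definition cnt A lam (b : X) : nat := count_mem b (tuple_sums A lam).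

Definition G_formula A lam : lspace :=
  LSpace (Bset A lam)
    (fun f g => \sum_(b <- Bset A lam) f b * (g b)^* / (cnt A lam b)%:R).

Definition is_G (A : 'I_n -> seq X) (lam : 'I_n -> nat) (P : lspace) : Prop :=
  exists Ps : 'I_n -> lspace,
    (forall i, is_power (laurent_space (A i)) (lam i) (Ps i)) /\
    is_mprod [seq Ps i | i <- enum 'I_n] P.

End Defs.

From HB Require Import structures.
From mathcomp Require Import all_boot all_order all_algebra ring.
Set Implicit Arguments. Unset Strict Implicit. Unset Printing Implicit Defensive.
Import Order.TTheory GRing.Theory Num.Theory.
Local Open Scope ring_scope.

(* Every space occurring in the theorem is a "weighted monomial space": for a
   finite multiset s of exponents, the space W(s) of Laurent polynomials
   supported on s in which the monomials are orthogonal and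
   <z^x, z^x> = 1 / (multiplicity of x in s).  The Laurent space F_A is
   W(undup A), the trivial space is W([:: 0]) and the claimed formula for
   G is W(tuple_sums A lam).

   The heart of the proof is the product rule (product_weighted): if E is
   W(s) and F is W(t), then P is the product E F iff P is W(s + t), where
   s + t is the multiset of all sums a + b.  In the tensor product the
   monomials z^a (x) z^b are orthogonal with squared norms
   1 / (m_s(a) m_t(b)); the preimage of g of minimal norm spreads g(x) over
   the pairs with a + b = x in proportion to m_s(a) m_t(b), and its norm is
   the W(s + t)-norm of g (a Pythagoras argument shows it is minimal).
   Polarization recovers the whole inner product from the norms.
   Iterating the product rule along a list of spaces, and using that the
   multiset sum is associative and commutative up to permutation, gives
   the theorem. *)

Section MultisetSums.
Variable n : nat.
Local Notation X := 'rV[int]_n.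

Definition allsums (s t : seq X) : seq X := [seq a + b | a <- s, b <- t].

Definition sum_all (L : seq (seq X)) : seq X := foldr allsums [:: 0] L.

Lemma allsums_cons a s t :
  allsums (a :: s) t = map (fun b => a + b) t ++ allsums s t.
Proof. by []. Qed.

Lemma allsums_catl s1 s2 t : allsums (s1 ++ s2) t = allsums s1 t ++ allsums s2 t.
Proof. by elim: s1 => //= a s1 IH; rewrite !allsums_cons IH catA. Qed.

Lemma allsums_shift a t u :
  allsums (map (fun b => a + b) t) u = map (fun b => a + b) (allsums t u).
Proof.
elim: t => //= b t IH; rewrite !allsums_cons IH map_cat -map_comp.
by congr (_ ++ _); apply: eq_map => c /=; rewrite addrA.
Qed.

Lemma allsumsA s t u : allsums (allsums s t) u = allsums s (allsums t u).
Proof. by elim: s => //= a s IH; rewrite !allsums_cons allsums_catl IH allsums_shift. Qed.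

Lemma allsums0l t : allsums [:: 0] t = t.
Proof. by rewrite allsums_cons cats0; elim: t => //= b t ->; rewrite add0r. Qed.

Lemma allsums0r s : allsums s [:: 0] = s.
Proof. by elim: s => //= a s IH; rewrite allsums_cons /= IH addr0. Qed.

Lemma count_allsums (p : pred X) s t :
  count p (allsums s t) = \sum_(a <- s) count (fun b => p (a + b)) t.
Proof.
elim: s => [|a s IH]; first by rewrite big_nil.
by rewrite allsums_cons count_cat IH big_cons count_map.
Qed.

Lemma perm_allsums s s' t t' : perm_eq s s' -> perm_eq t t' ->
  perm_eq (allsums s t) (allsums s' t').
Proof.
move=> ps pt; apply/permP => p; rewrite !count_allsums (perm_big _ ps).
by apply: eq_bigr => a _; apply/permP.
Qed.

Lemma sum_all_cat L1 L2 :
  perm_eq (sum_all (L1 ++ L2)) (allsums (sum_all L1) (sum_all L2)).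
Proof.
elim: L1 => [|s L1 IH] /=; first by rewrite allsums0l.
by rewrite allsumsA; apply: perm_allsums.
Qed.

Lemma sum_all_flatten LL :
  perm_eq (sum_all (flatten LL)) (sum_all (map sum_all LL)).
Proof.
elim: LL => [|L LL IH] //=.
by apply: perm_trans (sum_all_cat _ _) _; apply: perm_allsums.
Qed.

Lemma tuple_sums_perm (A : 'I_n -> seq X) (lam : 'I_n -> nat) :
  perm_eq (tuple_sums A lam)
    (sum_all [seq sum_all (nseq (lam i) (undup (A i))) | i <- enum 'I_n]).
Proof.
have sum_tuplesE l : sum_tuples l = sum_all (map undup l) by elim: l => //= ? ? ->.
rewrite /tuple_sums sum_tuplesE map_flatten -map_comp.
under eq_map => i do rewrite /= map_nseq.
by apply: perm_trans (sum_all_flatten _) _; rewrite -map_comp.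
Qed.

Lemma sum_count_undup (F : X -> nat) s :
  (\sum_(a <- s) F a = \sum_(a <- undup s) count_mem a s * F a)%N.
Proof.
rewrite -big_undup_iterop_count; apply: eq_bigr => a _.
by rewrite Monoid.iteropE; elim: (count_mem a s) => //= k ->; rewrite mulSn.
Qed.

End MultisetSums.

Lemma count_sum_nat (T : Type) (a : pred T) (s : seq T) :
  count a s = (\sum_(x <- s) a x)%N.
Proof. by rewrite -sum1_count big_mkcond. Qed.

Section WeightedSpaces.
Variables (C : numClosedFieldType) (n : nat).
Local Notation X := 'rV[int]_n.
Local Notation lsp := (lspace C n).

Definition wip (s : seq X) (f g : X -> C) : C :=
  \sum_(x <- undup s) f x * (g x)^* / (count_mem x s)%:R.

Definition weighted_space (s : seq X) : lsp := LSpace s (wip s).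

Definition is_weighted (E : lsp) (s : seq X) : Prop :=
  supp E =i s /\ forall f g, supported (supp E) f -> supported (supp E) g ->
    ip E f g = wip s f g.

Lemma supported_eq (S1 S2 : seq X) (f : X -> C) :
  S1 =i S2 -> supported S1 f -> supported S2 f.
Proof. by move=> e h x; rewrite -e; apply: h. Qed.

Lemma supported_comb (S : seq X) (k : C) (f g : X -> C) :
  supported S f -> supported S g -> supported S (fun x => k * f x + g x).
Proof. by move=> hf hg x hx; rewrite hf // hg // mulr0 addr0. Qed.

Lemma count_mem_neq0 (r : seq X) a : a \in r -> (count_mem a r)%:R != 0 :> C.
Proof. by move=> ha; rewrite pnatr_eq0 -lt0n -has_count has_pred1. Qed.

Lemma sum_kron (r : seq X) (a : X) (G : X -> C) :
  uniq r -> a \in r -> \sum_(x <- r) (x == a)%:R * G x = G a.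
Proof.
move=> ur ar; rewrite (bigD1_seq a) //= eqxx mul1r big1 ?addr0 // => x /negbTE ->.
by rewrite mul0r.
Qed.

Lemma sum_kron_in (r : seq X) (a : X) (F G : X -> C) : uniq r -> a \in r ->
  {in r, forall x, F x = (x == a)%:R * G x} -> \sum_(x <- r) F x = G a.
Proof. by move=> ur ar hFG; rewrite (eq_big_seq _ hFG) sum_kron. Qed.

Lemma wip_perm s s' f g : perm_eq s s' -> wip s f g = wip s' f g.
Proof.
move=> ps; rewrite /wip (perm_big _ (perm_undup (perm_mem ps))).
by apply: eq_bigr => x _; rewrite (permP ps).
Qed.

Lemma wip_sesq (s S : seq X) : is_sesq (@LSpace C n S (wip s)).
Proof.
split => /=.
  move=> f1 f2 g k _ _ _; rewrite /wip big_distrr -big_split /=.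
  by apply: eq_bigr => x _; ring.
move=> f g _ _; rewrite /wip rmorph_sum; apply: eq_bigr => x _.
by rewrite !rmorphM fmorphV /= conjC_nat conjCK [(f x)^* * _]mulrC.
Qed.

Lemma weighted_sesq E s : is_weighted E s -> is_sesq E.
Proof.
move=> [_ hE]; have [lin herm] := @wip_sesq s (supp E).
split=> [f1 f2 g k h1 h2 hg | f g hf hg].
  rewrite (hE _ _ (supported_comb k h1 h2) hg) (hE _ _ h1 hg) (hE _ _ h2 hg).
  exact: lin.
by rewrite (hE _ _ hf hg) (hE _ _ hg hf); apply: herm.
Qed.

Lemma is_weighted_perm E s s' : perm_eq s s' -> is_weighted E s -> is_weighted E s'.
Proof.
move=> ps [h1 h2]; split; first by move=> x; rewrite h1 (perm_mem ps).
by move=> f g hf hg; rewrite h2 // (wip_perm _ _ ps).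
Qed.

Lemma weighted_space_eq P Q s : is_weighted P s -> is_weighted Q s -> space_eq P Q.
Proof.
move=> [p1 p2] [q1 q2]; have e : supp P =i supp Q by move=> x; rewrite p1 q1.
split=> // f g hf hg; rewrite p2 // q2 //; exact: (supported_eq e).
Qed.

Lemma space_eq_weighted P Q s : space_eq P Q -> is_weighted Q s -> is_weighted P s.
Proof.
move=> [e1 e2] [q1 q2]; split; first by move=> x; rewrite e1 q1.
by move=> f g hf hg; rewrite e2 // q2 //; apply: (supported_eq e1).
Qed.

Lemma weighted_spaceP s : is_weighted (weighted_space s) s.
Proof. by split. Qed.

Lemma laurent_weighted (A : seq X) : is_weighted (laurent_space C A) (undup A).
Proof.
split; first by move=> x; rewrite mem_undup.
move=> f g _ _ /=; rewrite /wip [undup (undup A)]undup_id ?undup_uniq //.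
rewrite big_seq_cond [RHS]big_seq_cond; apply: eq_bigr => x /andP[hx _].
by rewrite (count_uniq_mem _ (undup_uniq A)) hx divr1.
Qed.

Lemma unit_weighted : is_weighted (unit_space C n) [:: 0].
Proof. by split => // f g _ _; rewrite /wip /= big_seq1 eqxx divr1. Qed.

Lemma G_formula_weighted (A : 'I_n -> seq X) lam :
  is_weighted (G_formula C A lam) (tuple_sums A lam).
Proof. by split => // x; rewrite /= /Bset mem_undup. Qed.

Lemma weighted_delta E s a a' : is_weighted E s -> a \in s -> a' \in s ->
  ip E (delta C a) (delta C a') = (a == a')%:R / (count_mem a s)%:R.
Proof.
move=> [hS hE] ha ha'.
have sd c : c \in s -> supported (supp E) (delta C c).
  by move=> hc x; rewrite hS /delta; case: eqP => // -> /negbTE; rewrite hc.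
rewrite (hE _ _ (sd _ ha) (sd _ ha')) /wip.
under eq_bigr => x _ do rewrite /delta -mulrA.
by rewrite sum_kron ?undup_uniq ?mem_undup // conjC_nat.
Qed.

End WeightedSpaces.

Section Polarization.
Variables (C : numClosedFieldType) (n : nat).
Local Notation X := 'rV[int]_n.

Section Expansions.
Variables (S : seq X) (B : (X -> C) -> (X -> C) -> C).
Hypothesis hB : is_sesq (@LSpace C n S B).
Variables (f g : X -> C).
Hypotheses (hf : supported S f) (hg : supported S g).

Let lin : forall f1 f2 g (k : C), supported S f1 -> supported S f2 ->
  supported S g -> B (fun x => k * f1 x + f2 x) g = k * B f1 g + B f2 g
  := proj1 hB.
Let herm : forall f g, supported S f -> supported S g -> B g f = (B f g)^*
  := proj2 hB.

Lemma polar_real : B (fun x => 1 * f x + g x) (fun x => 1 * f x + g x) =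
  B f f + B f g + B g f + B g g.
Proof.
have s1 := supported_comb 1 hf hg.
rewrite lin // mul1r (herm s1 hf) (herm s1 hg) /= !lin // !mul1r !rmorphD /=.
by rewrite -(herm hf hf) -(herm hg hf) -(herm hf hg) -(herm hg hg) !addrA.
Qed.

Lemma polar_imag : B (fun x => 'i * g x + f x) (fun x => 'i * g x + f x) =
  B f f + B g g + 'i * B g f - 'i * B f g.
Proof.
have s2 := supported_comb 'i hg hf.
rewrite lin // (herm s2 hf) (herm s2 hg) /= !lin // !rmorphD !rmorphM /= conjCi.
rewrite -(herm hf hf) -(herm hg hf) -(herm hf hg) -(herm hg hg).
have sqri : 'i * 'i = -1 :> C by rewrite -expr2 sqrCi.
by rewrite mulrDr mulrA mulrN sqri; ring.
Qed.

End Expansions.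

Lemma polarization (S : seq X) (B1 B2 : (X -> C) -> (X -> C) -> C) :
  is_sesq (@LSpace C n S B1) -> is_sesq (@LSpace C n S B2) ->
  (forall h, supported S h -> B1 h h = B2 h h) ->
  forall f g, supported S f -> supported S g -> B1 f g = B2 f g.
Proof.
move=> h1 h2 hn f g hf hg.
have E1 := hn _ (supported_comb 1 hg hf).
have E2 := hn _ (supported_comb 'i hg hf).
rewrite (polar_real h1 hg hf) (polar_real h2 hg hf) in E1.
rewrite (polar_imag h1 hf hg) (polar_imag h2 hf hg) in E2.
rewrite !(hn f) // !(hn g) // in E1 E2.
move: E1 E2; move: (B1 f g) (B2 f g) (B1 g f) (B2 g f) (B2 f f) (B2 g g).
move=> a1 a2 b1 b2 p q E1 E2.
(* the real and the imaginary identities together isolate B1 f g - B2 f g *)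
have : (2%:R * 'i) * (a1 - a2) =
    'i * ((q + b1 + a1 + p) - (q + b2 + a2 + p)) -
    ((p + q + 'i * b1 - 'i * a1) - (p + q + 'i * b2 - 'i * a2)) by ring.
rewrite E1 E2 !subrr mulr0 subrr => /eqP.
rewrite mulf_eq0 mulf_eq0 pnatr_eq0 /= (negbTE (neq0Ci C)) /=.
by rewrite subr_eq0 => /eqP.
Qed.

End Polarization.

Lemma min_norm_unique (C : numClosedFieldType) (n : nat) (E F : lspace C n)
    (g : 'rV[int]_n -> C) (r1 r2 : C) :
  is_min_norm E F g r1 -> is_min_norm E F g r2 -> r1 = r2.
Proof.
move=> [[h1 t1 [d1 <-]] min1] [[h2 t2 [d2 <-]] min2].
by apply: le_anti; rewrite min1 ?min2.
Qed.

Section ProductRule.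
Variables (C : numClosedFieldType) (n : nat).
Local Notation X := 'rV[int]_n.
Local Notation lsp := (lspace C n).
Variables (E F : lsp) (s t : seq X).
Hypotheses (hE : is_weighted E s) (hF : is_weighted F t).

Let uE := undup (supp E).
Let uF := undup (supp F).
Let st := allsums s t.
(* weight of z^a (x) z^b, the inverse of its squared norm in E (x) F *)
Let w (a b : X) : C := (count_mem a s * count_mem b t)%:R.
Let wst (x : X) : C := (count_mem x st)%:R.

Lemma mem_suppE a : (a \in uE) = (a \in s).
Proof. by rewrite mem_undup (proj1 hE). Qed.

Lemma mem_suppF b : (b \in uF) = (b \in t).
Proof. by rewrite mem_undup (proj1 hF). Qed.

Lemma w_neq0 a b : a \in uE -> b \in uF -> w a b != 0.
Proof.
rewrite mem_suppE mem_suppF /w natrM mulf_eq0 negb_or => ha hb.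
by rewrite !count_mem_neq0.
Qed.

Lemma sum_in_st a b : a \in uE -> b \in uF -> a + b \in undup st.
Proof. by rewrite mem_suppE mem_suppF mem_undup => ha hb; apply: allpairs_f. Qed.

Definition wtensor (h h' : X -> X -> C) : C :=
  \sum_(a <- uE) \sum_(b <- uF) h a b * (h' a b)^* / w a b.

Lemma tensor_ipE h h' : tensor_ip E F h h' = wtensor h h'.
Proof.
rewrite /tensor_ip /wtensor -/uE -/uF; apply: eq_big_seq => a ha.
rewrite exchange_big; apply: eq_big_seq => b hb /=.
rewrite (@sum_kron_in C n _ a _ (fun a' => h a b * (h' a' b)^* / w a b)) ?undup_uniq //.
move=> a' ha'.
rewrite (@sum_kron_in C n _ b _
  (fun b' => (a' == a)%:R * (h a b * (h' a' b')^* / w a b))) ?undup_uniq //.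
move=> b' hb'.
rewrite (weighted_delta hE) -?mem_suppE // (weighted_delta hF) -?mem_suppF //.
by rewrite /w natrM invfM [a == a']eq_sym [b == b']eq_sym; ring.
Qed.

Lemma wtensor_conj h h' : wtensor h' h = (wtensor h h')^*.
Proof.
rewrite /wtensor rmorph_sum; apply: eq_bigr => a _; rewrite rmorph_sum.
apply: eq_bigr => b _; rewrite !rmorphM fmorphV /= conjC_nat conjCK.
by rewrite [(h a b)^* * _]mulrC.
Qed.

Lemma wtensor_ge0 h : 0 <= wtensor h h.
Proof.
apply: sumr_ge0 => a _; apply: sumr_ge0 => b _.
by apply: divr_ge0; [apply: mul_conjC_ge0 | apply: ler0n].
Qed.

Lemma wtensor_sub h k :
  wtensor (fun a b => h a b - k a b) (fun a b => h a b - k a b) =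
  wtensor h h - wtensor h k - wtensor k h + wtensor k k.
Proof.
rewrite /wtensor -!sumrB -big_split /=; apply: eq_bigr => a _.
rewrite -!sumrB -big_split /=; apply: eq_bigr => b _.
by rewrite rmorphB /=; ring.
Qed.

(* The preimage of g of minimal norm: g(x) is spread over the pairs (a, b)
   with a + b = x in proportion to the weights w a b. *)
Definition min_lift (g : X -> C) : X -> X -> C :=
  fun a b => g (a + b) * w a b / wst (a + b).

Lemma sum_weights x : \sum_(a <- uE) \sum_(b <- uF) (a + b == x)%:R * w a b = wst x.
Proof.
have permE : perm_eq uE (undup s) by apply: perm_undup => y; rewrite (proj1 hE).
have permF : perm_eq uF (undup t) by apply: perm_undup => y; rewrite (proj1 hF).
rewrite /wst /st count_allsums sum_count_undup natr_sum (perm_big _ permE) /=.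
apply: eq_bigr => a _.
rewrite [count _ t]count_sum_nat sum_count_undup big_distrr natr_sum.
rewrite (perm_big _ permF) /=.
apply: eq_bigr => b _; rewrite /w -natrM; congr (_%:R).
by rewrite [LHS]mulnC -mulnA.
Qed.

Lemma min_lift_tsupported g : tsupported E F (min_lift g).
Proof.
move=> a b /orP[] h; rewrite /min_lift /w.
  by rewrite (count_memPn (_ : a \notin s)) ?mul0n ?mulr0 ?mul0r // -(proj1 hE).
by rewrite (count_memPn (_ : b \notin t)) ?muln0 ?mulr0 ?mul0r // -(proj1 hF).
Qed.

Lemma diag_min_lift g : supported st g -> forall x, diag E F (min_lift g) x = g x.
Proof.
move=> hg x; rewrite /diag -/uE -/uF.
transitivity (g x / wst x * \sum_(a <- uE) \sum_(b <- uF) (a + b == x)%:R * w a b).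
  rewrite mulr_sumr; apply: eq_bigr => a _; rewrite mulr_sumr.
  apply: eq_bigr => b _; rewrite /min_lift.
  case: (a + b =P x) => [<-|_]; last by rewrite !mul0r mulr0.
  by rewrite !mul1r mulrAC.
rewrite sum_weights; have [hx|hx] := boolP (x \in st).
  by rewrite divfK // count_mem_neq0.
by rewrite hg // !mul0r.
Qed.

Lemma wtensor_min_lift h g : (forall x, diag E F h x = g x) ->
  wtensor h (min_lift g) = wip st g g.
Proof.
move=> hd.
have termE a b : a \in uE -> b \in uF ->
    h a b * (min_lift g a b)^* / w a b =
    \sum_(x <- undup st) (x == a + b)%:R * (h a b * ((g x)^* / wst x)).
  move=> ha hb; rewrite sum_kron ?undup_uniq ?sum_in_st //.
  rewrite /min_lift !rmorphM fmorphV /= /wst /w !conjC_nat -mulrA.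
  by congr (_ * _); rewrite mulrAC mulfK // (w_neq0 ha hb).
rewrite /wtensor (eq_big_seq _ (fun a ha => eq_big_seq _ (termE a ^~ ha))).
under eq_bigr => a _ do rewrite exchange_big.
rewrite exchange_big /wip; apply: eq_bigr => x _.
transitivity (diag E F h x * ((g x)^* / wst x)); last by rewrite hd mulrA.
rewrite /diag -/uE -/uF mulr_suml; apply: eq_bigr => a _.
by rewrite mulr_suml; apply: eq_bigr => b _; rewrite [x == _]eq_sym mulrA.
Qed.

(* Pythagoras: min_lift g has the least norm among the preimages of g. *)
Lemma min_lift_minimal h g : supported st g -> (forall x, diag E F h x = g x) ->
  wip st g g <= wtensor h h.
Proof.
move=> hg hd.
have wreal : (wip st g g)^* = wip st g g
  := esym (proj2 (@wip_sesq C n st st) g g hg hg).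
have := wtensor_ge0 (fun a b => h a b - min_lift g a b).
rewrite wtensor_sub (wtensor_conj h (min_lift g)) (wtensor_min_lift hd).
by rewrite (wtensor_min_lift (diag_min_lift hg)) wreal subrK subr_ge0.
Qed.

Lemma sumsetE : sumset E F =i st.
Proof.
move=> x; apply/allpairsP/allpairsP => -[[a b] /= [ha hb ->]]; exists (a, b).
  by rewrite /= -(proj1 hE) -(proj1 hF).
by rewrite /= (proj1 hE) (proj1 hF).
Qed.

Lemma min_norm_weighted g : supported st g -> is_min_norm E F g (wip st g g).
Proof.
move=> hg; split; last by move=> h _ hd; rewrite tensor_ipE; apply: min_lift_minimal.
exists (min_lift g); first exact: min_lift_tsupported.
split; first exact: diag_min_lift.
by rewrite tensor_ipE (wtensor_min_lift (diag_min_lift hg)).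
Qed.

Lemma product_weighted P : is_product E F P <-> is_weighted P st.
Proof.
split.
  move=> [hsupp [hses hmin]].
  have hS : supp P =i st by move=> x; rewrite hsupp sumsetE.
  split=> //; apply: (polarization hses (@wip_sesq C n st (supp P))) => g hg.
  have hgst := supported_eq hS hg.
  exact: min_norm_unique (hmin g hg) (min_norm_weighted hgst).
move=> hP; have hS := proj1 hP.
split; first by move=> x; rewrite hS sumsetE.
split; first exact: weighted_sesq hP.
move=> g hg; rewrite (proj2 hP _ _ hg hg).
exact/min_norm_weighted/(supported_eq hS).
Qed.

End ProductRule.

Section IteratedProducts.
Variables (C : numClosedFieldType) (n : nat).
Local Notation X := 'rV[int]_n.
Local Notation lsp := (lspace C n).

Fixpoint all_weighted (l : seq lsp) (Ls : seq (seq X)) : Prop :=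
  match l, Ls with
  | [::], [::] => True
  | E :: l', s :: Ls' => is_weighted E s /\ all_weighted l' Ls'
  | _, _ => False
  end.

Lemma all_weighted_map (I : Type) (r : seq I) (Es : I -> lsp) (S : I -> seq X) :
  (forall i, is_weighted (Es i) (S i)) -> all_weighted (map Es r) (map S r).
Proof. by move=> h; elim: r => //= i r ->; split. Qed.

Lemma all_weighted_nseq k (E : lsp) s :
  is_weighted E s -> all_weighted (nseq k E) (nseq k s).
Proof. by move=> h; elim: k => //= k ->; split. Qed.

Lemma mprod_weighted (l : seq lsp) Ls P :
  all_weighted l Ls -> (is_mprod l P <-> is_weighted P (sum_all Ls)).
Proof.
elim: l Ls P => [|E l IH] [|s Ls] P //=.
  move=> _; split => h; first exact: space_eq_weighted h (unit_weighted C n).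
  exact: weighted_space_eq h (unit_weighted C n).
move=> [hE hl]; case: l IH hl => [|E' l] IH hl.
  case: Ls hl => // _; rewrite allsums0r.
  by split => h; [exact: space_eq_weighted h hE | exact: weighted_space_eq h hE].
split.
  by move=> [Q [hQ /(product_weighted hE ((IH Ls Q hl).1 hQ))]].
move=> hP; exists (weighted_space C (sum_all Ls)).
split; first exact/(IH Ls _ hl)/weighted_spaceP.
exact/(product_weighted hE (weighted_spaceP _ _)).
Qed.

End IteratedProducts.

Theorem mainTheorem8 (C : numClosedFieldType) (n : nat)
  (A : 'I_n -> seq 'rV[int]_n) (lam : 'I_n -> nat)
  (hlam : forall i, (0 < lam i)%N) (P : lspace C n) :
  is_G A lam P <-> space_eq P (G_formula C A lam).
Proof.
pose S i := sum_all (nseq (lam i) (undup (A i))).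
have powerE i Q : is_power (laurent_space C (A i)) (lam i) Q <-> is_weighted Q (S i).
  exact/mprod_weighted/all_weighted_nseq/laurent_weighted.
have hB : perm_eq (sum_all [seq S i | i <- enum 'I_n]) (tuple_sums A lam).
  by rewrite perm_sym tuple_sums_perm.
split.
  move=> [Ps [hpow hprod]].
  have hPs i : is_weighted (Ps i) (S i) by apply/powerE.
  have /(is_weighted_perm hB) hP := (mprod_weighted _ (all_weighted_map _ hPs)).1 hprod.
  exact: weighted_space_eq hP (G_formula_weighted C A lam).
move=> hP; exists (fun i => weighted_space C (S i)); split.
  by move=> i; apply/powerE/weighted_spaceP.
apply/(mprod_weighted _ (all_weighted_map _ (fun i => weighted_spaceP C (S i)))).
apply: is_weighted_perm (tuple_sums_perm A lam) _.
exact: space_eq_weighted hP (G_formula_weighted C A lam).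
Qed.
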